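(* Let $q$ and $d$ be positive integers and let $\mathcal{D}=\{(b_1,B_1),\ldots,(b_d,B_d)\}\subseteq [q]\times 2^{[q]}$ with $|B_i|\ge 2$ for all $i\in[d]$. Then ${\sf Div}(\mathcal{E}_{\mathcal{D}})=\overline{\mathcal{D}}$, where ${\sf Div}(\mathcal{E}_{\mathcal{D}})$ is computed with respect to the generators $\varepsilon_{\mathcal{D},1},\ldots,\varepsilon_{\mathcal{D},q}$ in this order. That is, the divisibility relations satisfied by the generators of $\mathcal{E}_{\mathcal{D}}$ are exactly the relations that can be deduced from $\mathcal{D}$.
   Context: Divisibility relations. Let $\Lambda$ be a finite nonempty set and $U=\{u_i:i\in\Lambda\}$ a set of monomials in a polynomial ring over a field, indexed so that $u_i=u_j$ implies $i=j$. A divisibility relation on $U$ is a pair $(b,B)$ with $b\in\Lambda$ and $\emptyset\ne B\subseteq\Lambda$ such that $u_b\mid \mathrm{lcm}(u_i: i\in B)$; ${\sf Div}(U)$ is the set of all of them. A pair $(b,B)\in\Lambda\times 2^\Lambda$ is trivial if $b\in B$. The extensions of $(b,B)$ are $(b,B)^{\sf ex}=\{(b,C): B\subseteq C\subseteq \Lambda\}$. Define the binary operation $(b,B)\circ(c,C)=(b,(B\smallsetminus\{c\})\cup C)$ on $\Lambda\times 2^\Lambda$ (it is neither commutative nor associative). For $\mathcal{D}\subseteq\Lambda\times 2^\Lambda$: $\mathcal{D}^\circ$ is the set of all compositions $(b_1,B_1)\circ\cdots\circ(b_s,B_s)$ with $s\ge1$, $(b_i,B_i)\in\mathcal{D}$,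 taken with every possible bracketing; $\mathcal{D}^{\sf ex}=\bigcup_{(b,B)\in\mathcal{D}}(b,B)^{\sf ex}$; $\Lambda^{\sf triv}=\{(b,B)\in\Lambda\times 2^\Lambda: b\in B\}$; and $\overline{\mathcal{D}}=(\mathcal{D}^\circ)^{\sf ex}\cup\Lambda^{\sf triv}$. Here $\Lambda=[q]$. $\mathcal{D}$-extremal ideals. Let $\mathsf k$ be a field and $S_{[q]}=\mathsf k[y_A:\emptyset\ne A\subseteq[q]]$. For $\mathcal{D}\subseteq [q]\times(2^{[q]}\smallsetminus\{\emptyset\})$ let $Q(\mathcal{D})=\{A\subseteq[q]: A\ne\emptyset,\ A\cap B\ne\emptyset \text{ for all }(b,B)\in\mathcal{D}\text{ with } b\in A\}$, let $\varepsilon_{\mathcal{D},i}=\prod_{A\in Q(\mathcal{D}),\, i\in A} y_A$ for $i\in[q]$, and let $\mathcal{E}_{\mathcal{D}}=(\varepsilon_{\mathcal{D},1},\ldots,\varepsilon_{\mathcal{D},q})\subseteq S_{[q]}$. ${\sf Div}(\mathcal{E}_{\mathcal{D}})$ denotes ${\sf Div}(\{\varepsilon_{\mathcal{D},1},\ldots,\varepsilon_{\mathcal{D},q}\})$ with indexing set $[q]$. *)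

From mathcomp Require Import all_boot.
Set Implicit Arguments. Unset Strict Implicit. Unset Printing Implicit Defensive.

(* Index set [q] is 'I_q (0-based).  Pairs (b,B) in Lambda x 2^Lambda. *)
Definition rel_t (q : nat) := ('I_q * {set 'I_q})%type.

(* ---------- Monomials of S_[q] = k[y_A : A nonempty subset of [q]] ----------
   A monomial is represented by its exponent vector, indexed by subsets A of [q]
   (the variable y_A).  The index A = set0 is never used (exponent 0 in every
   monomial we build). *)
Definition monomial (q : nat) := {ffun {set 'I_q} -> nat}.

Definition mdvd q (u v : monomial q) : bool := [forall A, u A <= v A].

Definition mlcm q (U : 'I_q -> monomial q) (B : {set 'I_q}) : monomial q :=
  [ffun A => \max_(i in B) U i A].

Definition Div q (U : 'I_q -> monomial q) (p : rel_t q) : Prop :=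
  p.2 != set0 /\ mdvd (U p.1) (mlcm U p.2).

Definition comp q (x y : rel_t q) : rel_t q := (x.1, (x.2 :\ y.1) :|: y.2).

Inductive comp_closure q (D : {set rel_t q}) : rel_t q -> Prop :=
| cc_base x : x \in D -> comp_closure D x
| cc_comp x y : comp_closure D x -> comp_closure D y -> comp_closure D (comp x y).

Definition closureD q (D : {set rel_t q}) (p : rel_t q) : Prop :=
  (exists2 c : 'I_q * {set 'I_q}, comp_closure D c & c.1 = p.1 /\ c.2 \subset p.2)
  \/ p.1 \in p.2.

Definition QD q (D : {set rel_t q}) : {set {set 'I_q}} :=
  [set A : {set 'I_q} | (A != set0) &&
     [forall p in D, (p.1 \in A) ==> (A :&: p.2 != set0)]].

Definition eps q (D : {set rel_t q}) (i : 'I_q) : monomial q :=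
  [ffun A => ((A \in QD D) && (i \in A) : nat)].

From mathcomp Require Import boolp.
From Pilot Require Import Defs.
From mathcomp Require Import all_boot.
Set Implicit Arguments. Unset Strict Implicit. Unset Printing Implicit Defensive.

(* Since eps D i is the squarefree product of the y_A with A in Q(D) and
   i in A, a relation (b, B) holds among the generators iff B meets every
   A in Q(D) containing b.  This property is preserved by composition,
   which gives Div >= closure.  Conversely, if (b, B) holds but b is not
   derivable into B, the set A of elements outside B that are not derivable
   into B contains b and lies in Q(D): were it disjoint from some C with
   (x, C) in D and x in A, then composing (x, C) with derivations of the
   elements of C outside B would derive x into B.  Since A misses B, this
   contradicts the relation. *)

Section DivisibilityOfEps.

Variables (q : nat) (D : {set rel_t q}).

Definition meetsQD (b : 'I_q) (B : {set 'I_q}) : Prop :=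
  forall A, A \in QD D -> b \in A -> A :&: B != set0.

Lemma mdvd_eps_mlcm b B : mdvd (eps D b) (mlcm (eps D) B) <-> meetsQD b B.
Proof.
rewrite /mdvd; split=> [/forallP dv A QA bA | meetsB].
- apply: contraTneq (dv A) => AB0.
  rewrite !ffunE QA bA -ltnNge ltnS.
  apply/bigmax_leqP => i iB; rewrite ffunE.
  suff /negbTE -> : i \notin A by rewrite andbF.
  by apply/negP => iA; move/setP/(_ i): AB0; rewrite !inE iA iB.
- apply/forallP => A; rewrite !ffunE.
  have [/andP[QA bA]|] //= := boolP ((A \in QD D) && (b \in A)).
  have /set0Pn[i /setIP[iA iB]] := meetsB A QA bA.
  by apply: leq_trans (leq_bigmax_cond _ iB); rewrite ffunE QA iA.
Qed.

Lemma Div_epsE b B : Div (eps D) (b, B) <-> B != set0 /\ meetsQD b B.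
Proof. by rewrite /Div mdvd_eps_mlcm. Qed.

Lemma meetsQD_mem b (B : {set 'I_q}) : b \in B -> meetsQD b B.
Proof. by move=> bB A _ bA; apply/set0Pn; exists b; rewrite inE bA. Qed.

Lemma meetsQD_sub b (B C : {set 'I_q}) :
  B \subset C -> meetsQD b B -> meetsQD b C.
Proof.
move=> BC meetsB A QA bA; have /set0Pn[i /setIP[iA iB]] := meetsB A QA bA.
by apply/set0Pn; exists i; rewrite inE iA (subsetP BC).
Qed.

Lemma meetsQD_neq0 b B :
  (forall p, p \in D -> p.2 != set0) -> meetsQD b B -> B != set0.
Proof.
move=> neqD meetsB; rewrite -[B]setTI; apply: meetsB; rewrite ?inE //.
apply/andP; split; first by apply/set0Pn; exists b.
by apply/forall_inP => p /neqD; rewrite in_setT setTI.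
Qed.

Lemma comp_closure_meetsQD c : comp_closure D c -> meetsQD c.1 c.2.
Proof.
elim=> [x xD | x y _ meetsx _ meetsy] A QA xA.
- by move: QA; rewrite inE => /andP[_ /forall_inP/(_ x xD)/implyP]; apply.
- have /set0Pn[i /setIP[iA ix]] := meetsx A QA xA.
  have [iy|ney] := eqVneq i y.1.
  + rewrite iy in iA; have /set0Pn[j /setIP[jA jy]] := meetsy A QA iA.
    by apply/set0Pn; exists j; rewrite !inE jA jy orbT.
  + by apply/set0Pn; exists i; rewrite !inE iA ney ix.
Qed.

Definition derivable (B : {set 'I_q}) (x : 'I_q) : Prop :=
  exists2 c, comp_closure D c & c.1 = x /\ c.2 \subset B.

Lemma derivable_comp B c : comp_closure D c ->
  {in c.2 :\: B, forall y, derivable B y} -> derivable B c.1.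
Proof.
(* Each composition with a derivation of some y in c.2 :\: B removes y. *)
move En: #|c.2 :\: B| => n; elim: n c En => [|n IHn] c En cc derc.
  by exists c => //; split=> //; rewrite -setD_eq0 -cards_eq0 En.
have [y yout] : exists y, y \in c.2 :\: B by apply/card_gt0P; rewrite En.
have [cy ccy [cy1 cyB]] := derc y yout.
have out_comp : (Defs.comp c cy).2 :\: B = (c.2 :\: B) :\ y.
  have /eqP cy_out : cy.2 :\: B == set0 by rewrite setD_eq0.
  by rewrite /= cy1 setDUl cy_out setU0 !setDDl setUC.
apply: (IHn (Defs.comp c cy)); last 2 first.
- exact: cc_comp.
- by move=> z; rewrite out_comp => /setD1P[_]; apply: derc.
by move: En; rewrite out_comp (cardsD1 y) yout add1n => -[].
Qed.

Lemma meetsQD_derivable b (B : {set 'I_q}) :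
  meetsQD b B -> b \notin B -> derivable B b.
Proof.
move=> meetsB bNB; apply: contrapT => bNder.
pose A := [set x | (x \notin B) && ~~ `[< derivable B x >]].
have bA : b \in A by rewrite inE bNB; apply/asboolPn.
have QA : A \in QD D.
  rewrite inE; apply/andP; split; first by apply/set0Pn; exists b.
  apply/forall_inP => x xD; apply/implyP => xA.
  apply: contraTneq xA => Ax0; rewrite inE negb_and !negbK; apply/orP; right.
  apply/asboolP; apply: derivable_comp (cc_base xD) _ => y /setDP[yx yNB].
  have : y \notin A.
    by apply/negP => yA; move/setP/(_ y): Ax0; rewrite in_setI yA yx in_set0.
  by rewrite inE yNB negbK => /asboolP.
have /set0Pn[i /setIP[iA iB]] := meetsB A QA bA.
by move: iA; rewrite inE iB.
Qed.

End DivisibilityOfEps.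

Theorem theorem3p4 (q d : nat) (hq : 0 < q) (hd : 0 < d)
    (bs : 'I_d -> 'I_q) (Bs : 'I_d -> {set 'I_q})
    (hB : forall i : 'I_d, 2 <= #|Bs i|) :
  let D : {set rel_t q} := [set (bs i, Bs i) | i : 'I_d] in
  forall p : rel_t q, Div (eps D) p <-> closureD D p.
Proof.
move=> D; have neqD p : p \in D -> p.2 != set0.
  by case/imsetP=> i _ ->; rewrite -card_gt0 (leq_trans _ (hB i)).
case=> b B; rewrite Div_epsE; split.
- case=> _ meetsB; have [bB|bNB] := boolP (b \in B); first by right.
  by left; apply: meetsQD_derivable.
- case=> [[c cc [/= <- cB]] | bB].
  + have meetsB := meetsQD_sub cB (comp_closure_meetsQD cc).
    by split=> //; apply: meetsQD_neq0 meetsB.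
  + by split; [apply/set0Pn; exists b | apply: meetsQD_mem].
Qed.
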